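(* Let $k\ge0$ be an integer, let $\mathcal H$ be a hypergraph, and let $\vec{\mathcal H}$ and $\vec{\mathcal H}'$ be two $k$-hyperarc-connected orientations of $\mathcal H$. Then there is a sequence $\vec{\mathcal H}=\vec{\mathcal H}_0,\vec{\mathcal H}_1,\ldots,\vec{\mathcal H}_\ell=\vec{\mathcal H}'$ of $k$-hyperarc-connected orientations of $\mathcal H$ such that for each $1\le i\le \ell$, $\vec{\mathcal H}_i$ arises from $\vec{\mathcal H}_{i-1}$ by reversing one directed hypercycle or one directed hyperpath of $\vec{\mathcal H}_{i-1}$.
   Context: A hypergraph $\mathcal H=(V,\mathcal E)$ consists of a finite vertex set $V$ and a finite multiset $\mathcal E$ of nonempty subsets of $V$ (hyperedges). Orienting a hyperedge $Z$ towards a vertex $v\in Z$ yields the hyperarc $(Z\setminus\{v\},v)$, with tail set $Z\setminus\{v\}$ and head $v$. An orientation $\vec{\mathcal H}$ of $\mathcal H$ is obtained by orienting every hyperedge (it is the multiset of resulting hyperarcs). For $\emptyset\ne X\subsetneq V$, the out-degree $d^+(X)$ is the number of hyperarcs $(Y,v)$ with $v\notin X$ and $Y\cap X\neq\emptyset$; $\vec{\mathcal H}$ is $k$-hyperarc-connected if $d^+(X)\ge k$ for every $\emptyset\neq X\subsetneq V$. For vertices $s,t$, an $(s,t)$-hyperpath is a sequence $(A_1,a_1),\ldots,(A_\ell,a_\ell)$ ($\ell\ge1$) of hyperarcs of the orientation with $s\in A_1$, $a_\ell=t$, $a_i\in A_{i+1}$ for $1\le i\le \ell-1$, and $a_1,\ldots,a_\ell$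 pairwise distinct; if $s=t$ it is called a directed hypercycle. Reversing such a hyperpath or hypercycle means, with $a_0:=s$, replacing each hyperarc $(A_i,a_i)$ by $((A_i\setminus\{a_{i-1}\})\cup\{a_i\},a_{i-1})$, for $i=1,\ldots,\ell$. *)

From mathcomp Require Import all_boot.
Set Implicit Arguments. Unset Strict Implicit. Unset Printing Implicit Defensive.

(* A hypergraph on a finite vertex type V is given by a finite index type I of
   hyperedge occurrences (so the hyperedges form a multiset) and E : I -> {set V};
   every hyperedge must be nonempty. *)
Definition hypergraph (V I : finType) (E : I -> {set V}) : Prop :=
  forall e, E e != set0.

(* An orientation chooses, for each hyperedge e, a head h e in E e.  The
   corresponding hyperarc is (tail E h e, h e). *)
Definition is_orientation (V I : finType) (E : I -> {set V}) (h : {ffun I -> V}) : Prop :=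
  forall e, h e \in E e.

Definition tail (V I : finType) (E : I -> {set V}) (h : {ffun I -> V}) (e : I) : {set V} :=
  E e :\ h e.

Definition outdeg (V I : finType) (E : I -> {set V}) (h : {ffun I -> V}) (X : {set V}) : nat :=
  #|[set e : I | (h e \notin X) && (tail E h e :&: X != set0)]|.

Definition k_hyperarc_connected (V I : finType) (E : I -> {set V}) (h : {ffun I -> V})
    (k : nat) : Prop :=
  forall X : {set V}, X != set0 -> X != setT -> k <= outdeg E h X.

(* p = [:: e_1; ...; e_l] (edge indices) gives the sequence of hyperarcs
   (A_i, a_i) = (tail E h e_i, h e_i).  It is an (s,t)-hyperpath (a directed
   hypercycle if s = t) iff l >= 1, s \in A_1, a_i \in A_{i+1}, a_l = t, and
   the heads a_1..a_l are pairwise distinct. *)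
Fixpoint hchain (V I : finType) (E : I -> {set V}) (h : {ffun I -> V})
    (x : V) (p : seq I) : bool :=
  match p with
  | [::] => true
  | e :: p' => (x \in tail E h e) && hchain E h (h e) p'
  end.

Definition is_hyperpath (V I : finType) (E : I -> {set V}) (h : {ffun I -> V})
    (s t : V) (p : seq I) : Prop :=
  [/\ p != [::], hchain E h s p, last s (map h p) = t & uniq (map h p)].

(* Reversal (with a_0 := s): the hyperarc (A_i, a_i) on hyperedge e_i becomes
   ((A_i \ a_{i-1}) u {a_i}, a_{i-1}), i.e. the head of e_i becomes a_{i-1};
   all other hyperarcs are unchanged. *)
Definition reverse_hyperpath (V I : finType) (h : {ffun I -> V}) (s : V) (p : seq I)
  : {ffun I -> V} :=
  [ffun e => if e \in p then nth s (s :: map h p) (index e p) else h e].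

Definition reversal_step (V I : finType) (E : I -> {set V}) (h h' : {ffun I -> V}) : Prop :=
  exists (s t : V) (p : seq I), is_hyperpath E h s t p /\ h' = reverse_hyperpath h s p.

From mathcomp Require Import all_boot zify.
Set Implicit Arguments. Unset Strict Implicit. Unset Printing Implicit Defensive.

(* Two orientations h, h' are connected in two phases, measuring progress by
   the in-degrees vindeg h v (number of hyperarcs with head v).
   - Phase 1 (deficit_step): while some s has fewer heads in h than in h',
     the exchange lemma yields t with surplus such that every set containing
     s but not t has out-degree > k.  Its proof uses that the sets whose
     complement is tight are closed under intersecting unions (submodularity
     of out-degree) together with the covering lemma covered_sum_le.  These
     cuts give an (s,t)-hyperpath; reversing it moves one unit of in-degree
     from t to s and keeps k-hyperarc-connectivity.
   - Phase 2 (balanced_step): once in-degrees agree, the hyperedges on which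
     h and h' disagree contain a directed cycle (closed_walk), which is a
     hypercycle of h; reversing it makes h agree with h' on it. *)

Lemma sum_ltn (T : finType) (P : pred T) (f g : T -> nat) (s : T) :
  P s -> (forall v, P v -> f v <= g v) -> f s < g s ->
  \sum_(v | P v) f v < \sum_(v | P v) g v.
Proof.
move=> Ps le_fg lt_s; rewrite (bigD1 s) //= [X in _ < X](bigD1 s) //= -addSn.
by apply: leq_add => //; apply: leq_sum => v /andP[Pv _]; exact: le_fg.
Qed.

(* Let P be a family of sets closed under unions of intersecting members,
   and let a, b be vertex weights with a(A) <= b(A) on every member A.  Then
   a(U) <= b(U) for every set U that is a union of members: the inclusion-
   maximal members inside U are pairwise disjoint and partition U. *)
Lemma covered_sum_le (T : finType) (P : pred {set T}) (a b : T -> nat) :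
  (forall A B, P A -> P B -> A :&: B != set0 -> P (A :|: B)) ->
  (forall A, P A -> \sum_(v in A) a v <= \sum_(v in A) b v) ->
  forall U : {set T}, (forall v, v \in U -> exists2 A, P A & (v \in A) && (A \subset U)) ->
  \sum_(v in U) a v <= \sum_(v in U) b v.
Proof.
move=> P_union P_le U; have [n] := ubnP #|U|; elim: n U => // n IH U ltUn coverU.
have [->|[v vU]] := set_0Vmem U; first by rewrite !big_set0.
have [A0 PA0 /andP[vA0 sA0U]] := coverU v vU.
pose inU A := P A && (A \subset U).
have PA0U : inU A0 by rewrite /inU PA0.
case: (@arg_maxnP _ A0 inU (fun A => #|A|) PA0U) => A /andP[PA sAU] maxA.
have A_gt0 : 0 < #|A|.
  by apply: leq_trans (maxA A0 PA0U); rewrite card_gt0; apply/set0Pn; exists v.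
rewrite (big_setID A) [X in _ <= X](big_setID A) /= (setIidPr sAU).
apply: leq_add; first exact: P_le.
apply: IH => [|x].
  by rewrite cardsD (setIidPr sAU); move: ltUn A_gt0 (subset_leq_card sAU); lia.
rewrite inE => /andP[xA xU]; have [B PB /andP[xB sBU]] := coverU x xU.
exists B => //; rewrite xB /=.
have disjAB : A :&: B == set0.
  apply: contraTT xA => AB; have PAB := P_union _ _ PA PB AB.
  have sABU : A :|: B \subset U by rewrite subUset sAU.
  have /eqP -> : A == A :|: B.
    by rewrite eqEcard subsetUl; apply: maxA; rewrite /inU PAB.
  by rewrite negbK inE xB orbT.
apply/subsetP => y yB; rewrite inE (subsetP sBU) // andbT.
by apply: contraTN disjAB => yA; apply/set0Pn; exists y; rewrite inE yA.
Qed.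

(* Take z in S
   with the largest set of ancestors: its out-neighbour y in S has at least
   as many ancestors, hence no new ones, so y is an ancestor of z. *)
Lemma closed_walk (T : finType) (r : rel T) (S : pred T) (x0 : T) :
  S x0 -> (forall x, S x -> exists2 y, S y & r x y) ->
  exists z y, r z y /\ connect r y z.
Proof.
move=> Sx0 succ; pose ancestors y := #|[set u | connect r u y]|.
case: (arg_maxnP ancestors Sx0) => z Sz maxz.
have [y Sy rzy] := succ z Sz; exists z, y; split => //.
apply: contraT => not_yz.
have : ancestors z < ancestors y.
  apply: proper_card; apply/properP; split.
    apply/subsetP => u; rewrite !inE => uz.
    by apply: connect_trans uz (connect1 rzy).
  by exists y; rewrite !inE ?connect0.
by rewrite ltnNge (maxz y Sy : ancestors y <= ancestors z).
Qed.

Lemma sum_belast (T : Type) (f : T -> nat) (s : T) (l : seq T) :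
  \sum_(v <- belast s l) f v + f (last s l) = f s + \sum_(v <- l) f v.
Proof.
elim: l s => [|y l IH] s /=; first by rewrite !big_nil addn0.
by rewrite !big_cons -addnA IH.
Qed.

Section Orientations.
Variables (V I : finType) (E : I -> {set V}).
Implicit Types (h : {ffun I -> V}) (X : {set V}) (P : V -> I -> bool) (q : seq I).

Definition indeg h X : nat := \sum_(e : I) (h e \in X).
Definition vindeg h (v : V) : nat := indeg h [set v].
Definition coverage X : nat := \sum_(e : I) (E e :&: X != set0).

Lemma outdeg_sum h X :
  outdeg E h X = \sum_(e : I) ((h e \notin X) && (tail E h e :&: X != set0)).
Proof.
rewrite /outdeg -sum1_card big_mkcond /=.
by apply: eq_bigr => e _; rewrite inE; case: ifP.
Qed.

(* Every hyperedge meeting X either has its head in X or leaves X. *)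
Lemma outdeg_indeg h X :
  is_orientation E h -> outdeg E h X + indeg h X = coverage X.
Proof.
move=> orient_h; rewrite outdeg_sum -big_split; apply: eq_bigr => e _ /=.
have he := orient_h e; case hX: (h e \in X) => /=.
  by rewrite (_ : E e :&: X != set0) //; apply/set0Pn; exists (h e); rewrite inE he.
rewrite addn0 (_ : tail E h e :&: X = E e :&: X) //.
by apply/setP => v; rewrite !inE; case: eqP => // ->; rewrite hX !andbF.
Qed.

Lemma outdeg_submod h X Y :
  outdeg E h (X :&: Y) + outdeg E h (X :|: Y) <= outdeg E h X + outdeg E h Y.
Proof.
rewrite !outdeg_sum -!big_split; apply: leq_sum => e _ /=.
set T := tail E h e.
have meetX : T :&: (X :&: Y) != set0 -> T :&: X != set0.
  by apply: contraNN => /eqP TX; rewrite setIA TX set0I.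
have meetY : T :&: (X :&: Y) != set0 -> T :&: Y != set0.
  by apply: contraNN => /eqP TY; rewrite setIC -setIA [Y :&: T]setIC TY setI0.
rewrite setIUr setU_eq0 negb_and !inE; move: meetX meetY.
by case: (T :&: (X :&: Y) != set0); case: (T :&: X != set0); case: (T :&: Y != set0);
   case: (h e \in X); case: (h e \in Y) => //= /(_ isT) ? /(_ isT) ?.
Qed.

Lemma indeg_compl h X : indeg h X + indeg h (~: X) = #|I|.
Proof.
rewrite /indeg -big_split -sum1_card; apply: eq_bigr => e _.
by rewrite inE; case: (h e \in X).
Qed.

Lemma indeg_vsum h X : indeg h X = \sum_(v in X) vindeg h v.
Proof.
rewrite /vindeg /indeg exchange_big /=; apply: eq_bigr => e _.
case hX: (h e \in X); last first.
  by rewrite big1 // => v vX; rewrite inE; case: eqP => // hev; rewrite hev vX in hX.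
rewrite (bigD1 (h e)) //= inE eqxx big1 // => v /andP[_ ne_v].
by rewrite inE eq_sym (negbTE ne_v).
Qed.

Lemma vindeg_total h : \sum_(v : V) vindeg h v = #|I|.
Proof.
rewrite -(indeg_compl h setT) setCT [indeg h set0]big1 ?addn0 => [|e _]; last by rewrite inE.
by rewrite indeg_vsum; apply: eq_bigl => v; rewrite inE.
Qed.

Fixpoint chain (P : V -> I -> bool) h (x : V) (q : seq I) : bool :=
  if q is e :: q' then P x e && chain P h (h e) q' else true.

Lemma hchainE h x q : hchain E h x q = chain (fun a e => a \in tail E h e) h x q.
Proof. by elim: q x => //= e q IH x; rewrite IH. Qed.

Lemma sub_chain (P Q : V -> I -> bool) h x q :
  (forall a e, P a e -> Q a e) -> chain P h x q -> chain Q h x q.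
Proof. by move=> PQ; elim: q x => //= e q IH x /andP[/PQ-> /IH]. Qed.

(* Along a chain, every hyperedge satisfies P with its predecessor head,
   which is exactly the head it receives when the chain is reversed. *)
Lemma chain_pred P h x q :
  chain P h x q -> {in q, forall e, P (nth x (x :: map h q) (index e q)) e}.
Proof.
elim: q x => //= e q IH x /andP[Pxe chain_q] e'; rewrite inE.
case: (eqVneq e e') => [<- //|_ /= e'q].
rewrite (set_nth_default (h e)) /= ?size_map ?ltnS ?index_size //; exact: IH.
Qed.

Definition arc_rel (P : V -> I -> bool) h : rel V :=
  fun a b => [exists e, P a e && (h e == b)].

Lemma walk_chain P h x p :
  path (arc_rel P h) x p -> exists2 q, map h q = p & chain P h x q.
Proof.
elim: p x => [|y p IH] x /=; first by exists [::].
case/andP => /existsP[e /andP[Pxe /eqP he]] /IH[q <- chain_q].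
by exists (e :: q); rewrite /= ?he ?Pxe.
Qed.

Lemma hyperpath_of_walk P h x p :
  (forall a e, P a e -> a \in tail E h e) ->
  path (arc_rel P h) x p -> uniq p -> p != [::] ->
  exists2 q, is_hyperpath E h x (last x p) q & chain P h x q.
Proof.
move=> P_tail /walk_chain[q <- chain_q] uniq_hq hq_nil; exists q => //.
split=> //; first by apply: contraNneq hq_nil => ->.
by rewrite hchainE; apply: sub_chain chain_q.
Qed.

Lemma reverse_out h s q e : e \notin q -> reverse_hyperpath h s q e = h e.
Proof. by move=> eNq; rewrite /reverse_hyperpath ffunE (negbTE eNq). Qed.

Lemma reverse_in h s q e :
  e \in q -> reverse_hyperpath h s q e = nth s (s :: map h q) (index e q).
Proof. by move=> eq; rewrite /reverse_hyperpath ffunE eq. Qed.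

Lemma reverse_heads h s q :
  uniq q -> map (reverse_hyperpath h s q) q = belast s (map h q).
Proof.
move=> uniq_q.
have -> : map (reverse_hyperpath h s q) q = [seq nth s (s :: map h q) (index e q) | e <- q].
  by apply/eq_in_map => e; apply: reverse_in.
elim: q s uniq_q => //= e q IH s /andP[eNq uniq_q]; rewrite eqxx; congr cons.
rewrite -(IH (h e) uniq_q); apply/eq_in_map => e' e'q /=.
rewrite (_ : (e == e') = false); last by apply: contraNF eNq => /eqP->.
by rewrite /= (set_nth_default (h e)) //= size_map ltnS index_size.
Qed.

Lemma indeg_reverse h s t q X : is_hyperpath E h s t q ->
  indeg (reverse_hyperpath h s q) X + (t \in X) = indeg h X + (s \in X).
Proof.
case=> _ _ <- uniq_hq; have uniq_q := map_uniq uniq_hq.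
have split_q (F : I -> nat) :
    \sum_(e : I) F e = \sum_(e <- q) F e + \sum_(e | e \notin q) F e.
  by rewrite (bigID (mem q)) /= -big_uniq.
rewrite /indeg !split_q.
under [\sum_(e | e \notin q) _]eq_bigr => e eNq do rewrite reverse_out //.
rewrite -(big_map (reverse_hyperpath h s q) xpredT (fun v => (v \in X) : nat)).
rewrite -(big_map h xpredT (fun v => (v \in X) : nat)) reverse_heads //.
by have := sum_belast (fun v => (v \in X) : nat) s (map h q); lia.
Qed.

Lemma reverse_orientation h s t q :
  is_orientation E h -> is_hyperpath E h s t q ->
  is_orientation E (reverse_hyperpath h s q).
Proof.
move=> orient_h [_ chain_q _ _] e; have [eq|eNq] := boolP (e \in q); last first.
  by rewrite reverse_out.
rewrite hchainE in chain_q; rewrite reverse_in //.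
by have /setD1P[] := chain_pred chain_q eq.
Qed.

Lemma outdeg_reverse h s t q X :
  is_orientation E h -> is_hyperpath E h s t q ->
  outdeg E (reverse_hyperpath h s q) X + (s \in X) = outdeg E h X + (t \in X).
Proof.
move=> orient_h path_q; have := indeg_reverse X path_q.
have := outdeg_indeg X orient_h.
have := outdeg_indeg X (reverse_orientation orient_h path_q); lia.
Qed.

Lemma vindeg_reverse h s t q v : is_hyperpath E h s t q ->
  vindeg (reverse_hyperpath h s q) v + (t == v) = vindeg h v + (s == v).
Proof. by rewrite /vindeg -!in_set1; apply: indeg_reverse. Qed.

(* Reversal preserves k-hyperarc-connectivity provided every set containing
   s but not t has out-degree above k (vacuous for hypercycles). *)
Lemma reverse_connected k h s t q :
  is_orientation E h -> is_hyperpath E h s t q -> k_hyperarc_connected E h k ->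
  (forall X, s \in X -> t \notin X -> k < outdeg E h X) ->
  k_hyperarc_connected E (reverse_hyperpath h s q) k.
Proof.
move=> orient_h path_q conn_h cut_st X X0 XT.
have := outdeg_reverse X orient_h path_q; have := conn_h X X0 XT.
case sX: (s \in X); case tX: (t \in X) => /=; try lia.
by have := cut_st X sX (negbT tX); lia.
Qed.

(* If every set containing s but not t is left by some hyperarc, then h has
   an (s,t)-hyperpath: otherwise the vertices reachable from s form such a
   set with out-degree 0. *)
Lemma hyperpath_of_cuts h s t :
  s != t -> (forall X, s \in X -> t \notin X -> 0 < outdeg E h X) ->
  exists q, is_hyperpath E h s t q.
Proof.
move=> neq_st cuts; pose r := arc_rel (fun a e => a \in tail E h e) h.
have reach_st : connect r s t.
  apply: contraT => not_st; pose R := [set v | connect r s v].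
  have := cuts R; rewrite !inE connect0 not_st lt0n cards_eq0 => /(_ isT isT)/set0Pn[e].
  rewrite !inE => /andP[/negP not_se /set0Pn[x]].
  rewrite inE => /andP[x_tail]; rewrite inE => sx; case: not_se.
  by apply: connect_trans sx (connect1 _); apply/existsP; exists e; rewrite x_tail eqxx.
case/connectP: reach_st => p walk_p t_last; move: t_last neq_st.
case: (shortenP walk_p) => p' walk_p' /andP[_ uniq_p'] _ -> neq_st.
have p'_nil : p' != [::] by apply: contraNneq neq_st => ->.
have [q path_q _] := hyperpath_of_walk (fun a e tail_ae => tail_ae) walk_p' uniq_p' p'_nil.
by exists q.
Qed.

Section Connectivity.
Variable k : nat.

Lemma proper_compl (s : V) (A : {set V}) :
  s \notin A -> A != set0 -> (~: A != set0) && (~: A != setT).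
Proof.
move=> sA /set0Pn[v vA]; apply/andP; split; first by apply/set0Pn; exists s; rewrite inE.
by apply/negP => /eqP/setP/(_ v); rewrite !inE vA.
Qed.

Definition cotight h s (A : {set V}) : bool :=
  [&& s \notin A, A != set0 & outdeg E h (~: A) <= k].

Lemma cotight_indeg h h' s A :
  is_orientation E h -> is_orientation E h' -> k_hyperarc_connected E h' k ->
  cotight h s A -> indeg h A <= indeg h' A.
Proof.
move=> orient_h orient_h' conn_h' /and3P[sA A0 tight_A].
have /andP[X0 XT] := proper_compl sA A0; have := conn_h' _ X0 XT.
have := outdeg_indeg (~: A) orient_h; have := outdeg_indeg (~: A) orient_h'.
by have := indeg_compl h A; have := indeg_compl h' A; lia.
Qed.

(* Submodularity: intersecting cotight sets have a cotight union. *)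
Lemma cotight_union h s A B :
  k_hyperarc_connected E h k -> cotight h s A -> cotight h s B ->
  A :&: B != set0 -> cotight h s (A :|: B).
Proof.
move=> conn_h /and3P[sA A0 tight_A] /and3P[sB B0 tight_B] AB0.
have sAB : s \notin A :&: B by rewrite inE negb_and sA.
have /andP[X0 XT] := proper_compl sAB AB0; have := conn_h _ X0 XT.
have := outdeg_submod h (~: A) (~: B); rewrite -setCU -setCI.
by rewrite /cotight inE negb_or sA sB setU_eq0 negb_and A0 /=; lia.
Qed.

(* The exchange lemma: if s has fewer heads in h than in h', some t has more,
   and every set containing s but not t is left by more than k hyperarcs.
   Otherwise every t with surplus lies in the union U of the s-cotight sets,
   where h has at most as many heads as h'; on the complement of U it has at
   most as many heads as h' at every vertex and fewer at s, which contradicts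
   that both have #|I| heads in total. *)
Lemma exchange h h' s :
  is_orientation E h -> is_orientation E h' ->
  k_hyperarc_connected E h k -> k_hyperarc_connected E h' k ->
  vindeg h s < vindeg h' s ->
  exists t, vindeg h' t < vindeg h t /\
            forall X, s \in X -> t \notin X -> k < outdeg E h X.
Proof.
move=> orient_h orient_h' conn_h conn_h' deficit_s.
pose cut_ok t := [forall X : {set V}, (s \in X) ==> (t \notin X) ==> (k < outdeg E h X)].
have [/existsP[t /andP[surplus_t /forallP ok_t]]|/existsPn no_t] :=
  boolP [exists t, (vindeg h' t < vindeg h t) && cut_ok t].
  by exists t; split=> // X sX tX; have := ok_t X; rewrite sX tX.
pose U := [set v | [exists A, cotight h s A && (v \in A)]].
have U_le : indeg h U <= indeg h' U.
  rewrite !indeg_vsum; apply: (@covered_sum_le _ (cotight h s)) => [A B|A|v].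
  - exact: cotight_union.
  - by rewrite -!indeg_vsum; exact: cotight_indeg.
  - rewrite inE => /existsP[A /andP[cA vA]]; exists A; rewrite // vA.
    by apply/subsetP => x xA; rewrite inE; apply/existsP; exists A; rewrite cA.
have sU : s \in ~: U.
  by rewrite !inE; apply/existsPn => A; apply/andP => -[/and3P[/negP sA _ _]].
have outside_le v : v \in ~: U -> vindeg h v <= vindeg h' v.
  rewrite leqNgt inE => vU; apply: contraNN vU => surplus_v.
  have := no_t v; rewrite surplus_v /= => /forallPn[X]; rewrite negb_imply => /andP[sX].
  rewrite negb_imply -leqNgt => /andP[vX tight_X].
  rewrite inE; apply/existsP; exists (~: X).
  rewrite /cotight !inE vX sX setCK tight_X /= andbT.
  by apply/andP; split => //; apply/set0Pn; exists v; rewrite inE.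
have := sum_ltn sU outside_le deficit_s; rewrite -!indeg_vsum.
by have := indeg_compl h U; have := indeg_compl h' U; lia.
Qed.

Definition deficit h h' : nat := \sum_(v : V) (vindeg h' v - vindeg h v).

Lemma deficit_step h h' s :
  is_orientation E h -> is_orientation E h' ->
  k_hyperarc_connected E h k -> k_hyperarc_connected E h' k ->
  vindeg h s < vindeg h' s ->
  exists h2, [/\ reversal_step E h h2, is_orientation E h2,
                 k_hyperarc_connected E h2 k & deficit h2 h' < deficit h h'].
Proof.
move=> orient_h orient_h' conn_h conn_h' deficit_s.
have [t [surplus_t cut_st]] := exchange orient_h orient_h' conn_h conn_h' deficit_s.
have neq_st : s != t by apply: contraTneq deficit_s => ->; rewrite -leqNgt ltnW.
have [q path_q] : exists q, is_hyperpath E h s t q.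
  by apply: hyperpath_of_cuts neq_st _ => X sX tX; apply: leq_ltn_trans (cut_st X sX tX).
exists (reverse_hyperpath h s q); split.
- by exists s, t, q.
- exact: reverse_orientation path_q.
- exact: reverse_connected path_q conn_h cut_st.
apply: (sum_ltn (s := s)) => // [v _|]; last first.
  by have := vindeg_reverse s path_q; rewrite eqxx eq_sym (negbTE neq_st); lia.
have := vindeg_reverse v path_q.
have [<-|_] := eqVneq t v; first by rewrite (negbTE neq_st); lia.
by case: (eqVneq s v) => [<-|_] /=; lia.
Qed.

Definition disagreement h h' : {set I} := [set e | h e != h' e].

Lemma balanced_successor h h' e1 :
  (forall v, vindeg h v = vindeg h' v) -> h e1 != h' e1 ->
  exists2 e2, h e2 != h' e2 & h' e2 = h e1.
Proof.
move=> balanced ne1; set z := h e1.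
have [/existsP[e2 /andP[ne2 /eqP h'e2]]|/existsPn no_e2] :=
  boolP [exists e2, (h e2 != h' e2) && (h' e2 == z)]; first by exists e2.
suff : vindeg h' z < vindeg h z by rewrite balanced ltnn.
apply: (sum_ltn (s := e1)) => // [e _|]; rewrite !inE; last first.
  by rewrite eqxx eq_sym (negbTE ne1).
case: (eqVneq (h' e) z) => [h'ez|] //.
by move: (no_e2 e); rewrite h'ez eqxx andbT negbK => ->.
Qed.

(* Hence the digraph of disagreeing hyperedges, with arcs h' e -> h e, has a
   directed cycle; as a hypercycle of h it enters each hyperedge through its
   h'-head, so reversing it agrees with h' on all its hyperedges. *)
Lemma balanced_cycle h h' :
  is_orientation E h' -> (forall v, vindeg h v = vindeg h' v) -> h != h' ->
  exists z q, is_hyperpath E h z z q /\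
    {in q, forall e, (h e != h' e) && (reverse_hyperpath h z q e == h' e)}.
Proof.
move=> orient_h' balanced neq_hh'.
have /existsP[e0 ne0] : [exists e0, h e0 != h' e0].
  apply: contraNT neq_hh' => /existsPn eq_hh'.
  by apply/eqP/ffunP => e; apply/eqP/negPn/eq_hh'.
pose P a e := (h e != h' e) && (h' e == a); pose r := arc_rel P h.
have P_tail a e : P a e -> a \in tail E h e.
  by case/andP => ne /eqP <-; rewrite !inE eq_sym ne orient_h'.
pose S y := [exists e, (h e != h' e) && (h e == y)].
have [|y|z [y [/existsP[e /andP[Pze /eqP hey]] /connectP[p walk_p]]]] :=
  @closed_walk _ r S (h e0).
- by apply/existsP; exists e0; rewrite ne0 eqxx.
- case/existsP => e1 /andP[ne1 /eqP <-]; have [e2 ne2 h'e2] := balanced_successor balanced ne1.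
  exists (h e2); apply/existsP; exists e2; first by rewrite ne2 eqxx.
  by rewrite /P ne2 h'e2 !eqxx.
case: (shortenP walk_p) => p' walk_p' uniq_yp' _ z_last.
have walk_zp' : path r z (y :: p').
  by rewrite /= walk_p' andbT; apply/existsP; exists e; rewrite Pze hey eqxx.
have [q path_q chain_q] := hyperpath_of_walk P_tail walk_zp' uniq_yp' isT.
rewrite /= -z_last in path_q; exists z, q; split=> // e' e'q.
have /andP[ne' /eqP h'e'] := chain_pred chain_q e'q.
by rewrite ne' reverse_in // h'e' eqxx.
Qed.

Lemma balanced_step h h' :
  is_orientation E h -> is_orientation E h' -> k_hyperarc_connected E h k ->
  (forall v, vindeg h v = vindeg h' v) -> h != h' ->
  exists h2, [/\ reversal_step E h h2, is_orientation E h2, k_hyperarc_connected E h2 k,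
                 (forall v, vindeg h2 v = vindeg h' v) &
                 #|disagreement h2 h'| < #|disagreement h h'|].
Proof.
move=> orient_h orient_h' conn_h balanced neq_hh'.
have [z [q [path_q agree_q]]] := balanced_cycle orient_h' balanced neq_hh'.
exists (reverse_hyperpath h z q); split.
- by exists z, z, q.
- exact: reverse_orientation path_q.
- by apply: (reverse_connected orient_h path_q conn_h) => X ->.
- by move=> v; have := vindeg_reverse v path_q; rewrite -balanced; lia.
have [e e_q] : exists e, e \in q.
  by case: path_q; case: q {agree_q} => // e q' _; exists e; rewrite mem_head.
apply: proper_card; apply/properP; split.
  apply/subsetP => e'; rewrite !inE.
  by have [/agree_q/andP[_ /eqP->]|/reverse_out->] := boolP (e' \in q); rewrite ?eqxx.
have /andP[ne /eqP agree_e] := agree_q e e_q.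
by exists e; rewrite !inE ?agree_e ?eqxx.
Qed.

End Connectivity.
End Orientations.

Definition reconfigurable (V I : finType) (E : I -> {set V}) (k : nat)
    (h h' : {ffun I -> V}) : Prop :=
  exists (l : nat) (H : nat -> {ffun I -> V}),
    [/\ H 0 = h, H l = h',
        (forall i, i <= l -> is_orientation E (H i) /\ k_hyperarc_connected E (H i) k) &
        (forall i, 1 <= i <= l -> reversal_step E (H i.-1) (H i))].

Section Reconfiguration.
Variables (V I : finType) (E : I -> {set V}) (k : nat).
Implicit Types (h : {ffun I -> V}).

Lemma reconfigurable_refl h :
  is_orientation E h -> k_hyperarc_connected E h k -> reconfigurable E k h h.
Proof.
by move=> orient_h conn_h; exists 0, (fun=> h); split=> // [[]].
Qed.

Lemma reconfigurable_step h h2 h' :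
  is_orientation E h -> k_hyperarc_connected E h k -> reversal_step E h h2 ->
  reconfigurable E k h2 h' -> reconfigurable E k h h'.
Proof.
move=> orient_h conn_h step [l [H [H0 Hl good_H step_H]]].
exists l.+1, (fun i => if i is i'.+1 then H i' else h); split=> //.
  by case=> [|i] //= /good_H.
case=> [|[|i]] //=; first by rewrite H0.
exact: (step_H i.+1).
Qed.

Lemma balanced_reconfigurable h h' :
  is_orientation E h' -> is_orientation E h -> k_hyperarc_connected E h k ->
  (forall v, vindeg h v = vindeg h' v) -> reconfigurable E k h h'.
Proof.
move=> orient_h'; have [n] := ubnP #|disagreement h h'|.
elim: n h => // n IH h lt_dn orient_h conn_h balanced.
have [<-|neq_hh'] := eqVneq h h'; first exact: reconfigurable_refl.
have [h2 [step orient_h2 conn_h2 balanced2 lt_d]] :=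
  balanced_step orient_h orient_h' conn_h balanced neq_hh'.
by apply: reconfigurable_step step _ => //; apply: IH => //; apply: leq_trans lt_d _.
Qed.

(* Both orientations have #|I| heads in total, so if no vertex has fewer
   heads in h than in h', the in-degrees agree. *)
Lemma balanced_of_no_deficit h h' :
  (forall v, vindeg h' v <= vindeg h v) -> forall v, vindeg h v = vindeg h' v.
Proof.
move=> le_h'h v; apply/eqP; rewrite eqn_leq le_h'h andbT leqNgt; apply/negP => lt_v.
by have := sum_ltn (P := xpredT) isT (fun u _ => le_h'h u) lt_v; rewrite !vindeg_total ltnn.
Qed.

Lemma reconfigurable_all h h' :
  is_orientation E h' -> k_hyperarc_connected E h' k ->
  is_orientation E h -> k_hyperarc_connected E h k -> reconfigurable E k h h'.
Proof.
move=> orient_h' conn_h'; have [n] := ubnP (deficit h h').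
elim: n h => // n IH h lt_dn orient_h conn_h.
have [/existsP[s deficit_s]|/existsPn no_deficit] :=
  boolP [exists s, vindeg h s < vindeg h' s].
  have [h2 [step orient_h2 conn_h2 lt_d]] :=
    deficit_step orient_h orient_h' conn_h conn_h' deficit_s.
  by apply: reconfigurable_step step _ => //; apply: IH => //; apply: leq_trans lt_d _.
apply: balanced_reconfigurable => //; apply: balanced_of_no_deficit => v.
by rewrite leqNgt no_deficit.
Qed.

End Reconfiguration.

Unset Implicit Arguments.

Theorem mainTheorem3 (V I : finType) (E : I -> {set V}) (k : nat)
    (h h' : {ffun I -> V}) :
  hypergraph E ->
  is_orientation E h -> k_hyperarc_connected E h k ->
  is_orientation E h' -> k_hyperarc_connected E h' k ->
  exists (l : nat) (H : nat -> {ffun I -> V}),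
    [/\ H 0 = h, H l = h',
        (forall i, i <= l -> is_orientation E (H i) /\ k_hyperarc_connected E (H i) k) &
        (forall i, 1 <= i <= l -> reversal_step E (H i.-1) (H i))].
Proof.
move=> _ orient_h conn_h orient_h' conn_h'.
exact: reconfigurable_all.
Qed.
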